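(* Let $C \subseteq \mathbb{F}_q^n$ be an arbitrary subspace over the finite field $\mathbb{F}_q$. Then $C$ is $\left(1+\frac{1}{q}\right)$-non-overlapping.
   Context: For a subspace $C \ne \{0\}$, $d(C) := \min_{u \in C\setminus\{0\}}\|u\|_0$, where $\|u\|_0$ is the number of nonzero coordinates. A subspace $C$ is $\alpha$-non-overlapping ($\alpha \ge 1$) if for any $u, v \in C$ linearly independent over $\mathbb{F}_q$, $|\mathrm{supp}(u)\cup\mathrm{supp}(v)| \ge \alpha\cdot d(C)$, where $\mathrm{supp}(u)$ is the set of nonzero coordinates of $u$. *)

From HB Require Import structures.
From mathcomp Require Import all_boot all_order all_algebra all_field.
Set Implicit Arguments. Unset Strict Implicit. Unset Printing Implicit Defensive.
Import GRing.Theory Num.Theory.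
Local Open Scope ring_scope.

Definition supp (F : fieldType) (n : nat) (u : 'rV[F]_n) : {set 'I_n} :=
  [set i | u 0 i != 0].

Definition wt (F : fieldType) (n : nat) (u : 'rV[F]_n) : nat := #|supp u|.

(* minimum distance d(C) = min over nonzero u in C of wt u.
   (The default value n is never below the true minimum, so for C <> {0}
   this is exactly the minimum; for C = {0} it is irrelevant.) *)
Definition dmin (F : finFieldType) (n : nat) (C : {vspace 'rV[F]_n}) : nat :=
  \big[minn/n]_(u : 'rV[F]_n | (u \in C) && (u != 0)) wt u.

Definition non_overlapping (F : finFieldType) (n : nat)
    (alpha : rat) (C : {vspace 'rV[F]_n}) : Prop :=
  1 <= alpha /\
  forall u v : 'rV[F]_n, u \in C -> v \in C -> free [:: u; v] ->
    alpha * (dmin C)%:R <= (#|supp u :|: supp v|)%:R.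

(* Double counting: sum the weights of all q^2 combinations a u + b v.  A
   coordinate outside supp u ∪ supp v contributes nothing, and one inside it
   is nonzero for exactly q^2 - q pairs (a, b), since a nonzero linear form on
   F^2 has a kernel of size q.  On the other hand the q^2 - 1 nonzero pairs
   give nonzero codewords of C, each of weight at least d(C).  Hence
   (q^2 - 1) d(C) <= (q^2 - q) |supp u ∪ supp v|, i.e.
   (q + 1) d(C) <= q |supp u ∪ supp v|. *)

From HB Require Import structures.
From mathcomp Require Import all_boot all_order all_algebra all_field.
From mathcomp Require Import zify.
Set Implicit Arguments. Unset Strict Implicit. Unset Printing Implicit Defensive.
Import Order.TTheory GRing.Theory Num.Theory.
Local Open Scope ring_scope.

Lemma dmin_le_wt (F : finFieldType) (n : nat) (C : {vspace 'rV[F]_n}) w :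
  w \in C -> w != 0 -> (dmin C <= wt w)%N.
Proof.
move=> wC w0; rewrite /dmin -minEnat.
by apply: (@bigmin_le_cond _ nat _ _ _ (fun u => (u \in C) && (u != 0))); rewrite wC.
Qed.

Lemma free_pair_comb_eq0 (K : fieldType) (vT : vectType K) (u v : vT) a b :
  free [:: u; v] -> a *: u + b *: v = 0 -> a = 0 /\ b = 0.
Proof.
move=> /(@freeP _ _ 2 [tuple u; v]) uv_free uv0.
have := uv_free (fun i => if i == ord0 then a else b).
rewrite big_ord_recl big_ord1 /= => /(_ uv0) k0.
by split; [exact: (k0 ord0) | exact: (k0 ord_max)].
Qed.

Section LinearFormKernel.

Variables (F : finFieldType) (x y : F).

Lemma card_linear_form_eq0 : (x != 0) || (y != 0) ->
  #|[set p : F * F | p.1 * x + p.2 * y == 0]| = #|F|.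
Proof.
case/orP => [x0 | y0].
- have -> : [set p : F * F | p.1 * x + p.2 * y == 0] =
            [set (- (b * y) / x, b) | b : F].
    apply/setP => -[a b]; rewrite inE /=; apply/idP/imsetP => [| [c _ [-> ->]]].
      by rewrite addr_eq0 => /eqP ax; exists b => //; rewrite -ax mulfK.
    by rewrite divfK // addNr eqxx.
  by rewrite card_imset // => b c [].
- have -> : [set p : F * F | p.1 * x + p.2 * y == 0] =
            [set (a, - (a * x) / y) | a : F].
    apply/setP => -[a b]; rewrite inE /=; apply/idP/imsetP => [| [c _ [-> ->]]].
      by rewrite addrC addr_eq0 => /eqP bx; exists a => //; rewrite -bx mulfK.
    by rewrite divfK // addrN eqxx.
  by rewrite card_imset // => a c [].
Qed.

Lemma card_linear_form_neq0 : (x != 0) || (y != 0) ->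
  #|[set p : F * F | p.1 * x + p.2 * y != 0]| = (#|F| * #|F| - #|F|)%N.
Proof.
move=> xy0; rewrite cardsCs card_prod -(card_linear_form_eq0 xy0).
suff -> : ~: [set p : F * F | p.1 * x + p.2 * y != 0] =
          [set p | p.1 * x + p.2 * y == 0] by [].
by apply/setP => p; rewrite !inE negbK.
Qed.

End LinearFormKernel.

Section SpanWeights.

Variables (F : finFieldType) (n : nat) (u v : 'rV[F]_n).

Lemma sum_wt_span2 :
  (\sum_(p : F * F) wt (p.1 *: u + p.2 *: v))%N =
  (#|supp u :|: supp v| * (#|F| * #|F| - #|F|))%N.
Proof.
have wt_sum (w : 'rV[F]_n) : wt w = (\sum_i ((w 0 i != 0)%R : nat))%N.
  by rewrite /wt -sum1_card big_mkcond /=; apply: eq_bigr => i _; rewrite inE.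
under eq_bigr do rewrite wt_sum.
rewrite exchange_big -sum_nat_const [RHS]big_mkcond /=; apply: eq_bigr => i _.
rewrite !inE; under eq_bigr do rewrite !mxE.
case: ifP => [uvi0 | /norP[/negbNE/eqP-> /negbNE/eqP->]].
- rewrite -(card_linear_form_neq0 uvi0) -sum1_card [RHS]big_mkcond /=.
  by apply: eq_bigr => p _; rewrite inE.
- by rewrite big1 // => p _; rewrite !mulr0 addr0 eqxx.
Qed.

Lemma dmin_le_sum_wt_span2 (C : {vspace 'rV[F]_n}) :
  u \in C -> v \in C -> free [:: u; v] ->
  ((#|F| * #|F| - 1) * dmin C <= \sum_(p : F * F) wt (p.1 *: u + p.2 *: v))%N.
Proof.
move=> uC vC uv_free.
rewrite (bigD1 (0, 0)) //= subn1 -card_prod -(cardC1 (0 : F, 0 : F)).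
rewrite -sum_nat_const (leq_trans _ (leq_addl _ _)) //.
apply: leq_sum => -[a b] ab0; apply: dmin_le_wt; first by rewrite memvD ?memvZ.
by apply: contra ab0 => /= /eqP /(free_pair_comb_eq0 uv_free) [-> ->].
Qed.

End SpanWeights.

Lemma dmin_supp_union_bound (F : finFieldType) (n : nat) (C : {vspace 'rV[F]_n}) u v :
  u \in C -> v \in C -> free [:: u; v] ->
  ((#|F| + 1) * dmin C <= #|supp u :|: supp v| * #|F|)%N.
Proof.
move=> uC vC uv_free; have q_gt1 := finNzRing_gt1 F.
have := dmin_le_sum_wt_span2 uC vC uv_free; rewrite sum_wt_span2.
have -> : (#|F| * #|F| - 1 = (#|F| - 1) * (#|F| + 1))%N by nia.
have -> : (#|F| * #|F| - #|F| = (#|F| - 1) * #|F|)%N by nia.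
by rewrite mulnCA -mulnA leq_pmul2l ?subn_gt0.
Qed.

Theorem lemma2p6 (F : finFieldType) (n : nat) (C : {vspace 'rV[F]_n}) :
  non_overlapping (1 + (#|F|%:R)^-1) C.
Proof.
have q_gt0 : (0 : rat) < #|F|%:R by rewrite ltr0n ltnW ?finNzRing_gt1.
split=> [|u v uC vC uv_free]; first by rewrite lerDl invr_ge0 ltW.
rewrite -(ler_pM2r q_gt0) mulrAC mulrDl mul1r mulVf ?gt_eqF //.
by rewrite -(natrD _ _ 1) -!natrM ler_nat; apply: dmin_supp_union_bound.
Qed.
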